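(* Let $\mathcal X$ be the Hawaiian earring and $\Phi:\pi_1(\mathcal X,0)\times\pi_1(\mathcal X,0)\to\pi_1(\mathcal X\times\mathcal X,(0,0))$ the isomorphism $\Phi([f],[g])=[(f,g)]$, $(f,g)(t)=(f(t),g(t))$. Then $\Phi\big(\mathfrak P^\omega(\mathcal X)\times\mathfrak P^\omega(\mathcal X)\big)\ne\mathfrak P^\omega(\mathcal X\times\mathcal X)$ (although it is contained in it).
   Context: For $n\in\mathbb N$, $C_n=\{(x,y)\in\mathbb R^2: x^2+(y-\tfrac1n)^2=\tfrac1{n^2}\}$ and $\mathcal X=\bigcup_{n\in\mathbb N}C_n$, base point $0$. For a space $Z$ and $z_0\in Z$, an $\omega$-loop at $z_0$ is a continuous $k:[0,1]\to Z$ with $k(0)=k(1)=z_0$ all of whose fibres $k^{-1}(z)$ are finite; $\mathfrak P^\omega(Z,z_0)$ (written $\mathfrak P^\omega(Z)$) is the subgroup of $\pi_1(Z,z_0)$ generated by the homotopy classes (rel endpoints) of $\omega$-loops at $z_0$; here base points $0$ and $(0,0)$ are used. *)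

From Stdlib Require Import Reals List.
Open Scope R_scope.

Section Gen.
Context {P : Type} (d : P -> P -> R).

Definition I01 (t : R) : Prop := 0 <= t <= 1.

Definition pcont (f : R -> P) : Prop :=
  forall t, I01 t -> forall eps, eps > 0 ->
    exists delta, delta > 0 /\
      forall s, I01 s -> Rabs (s - t) < delta -> d (f s) (f t) < eps.

Definition pcont2 (H : R -> R -> P) : Prop :=
  forall s t, I01 s -> I01 t -> forall eps, eps > 0 ->
    exists delta, delta > 0 /\
      forall s' t', I01 s' -> I01 t' -> Rabs (s' - s) < delta ->
        Rabs (t' - t) < delta -> d (H s' t') (H s t) < eps.

Variables (Z : P -> Prop) (z0 : P).

Definition is_loop (k : R -> P) : Prop :=
  pcont k /\ (forall t, I01 t -> Z (k t)) /\ k 0 = z0 /\ k 1 = z0.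

Definition finite_fibres (k : R -> P) : Prop :=
  forall z, exists l : list R, forall t, I01 t -> k t = z -> In t l.

Definition omega_loop (k : R -> P) : Prop := is_loop k /\ finite_fibres k.

Definition homotopic (f g : R -> P) : Prop :=
  exists H : R -> R -> P, pcont2 H /\
    (forall s t, I01 s -> I01 t -> Z (H s t)) /\
    (forall t, I01 t -> H 0 t = f t /\ H 1 t = g t) /\
    (forall s, I01 s -> H s 0 = z0 /\ H s 1 = z0).

Definition const_loop : R -> P := fun _ => z0.
Definition concat (f g : R -> P) : R -> P :=
  fun t => if Rle_dec t (1/2) then f (2 * t) else g (2 * t - 1).
Definition rev_path (f : R -> P) : R -> P := fun t => f (1 - t).

Inductive omega_word : (R -> P) -> Prop :=
| ow_const : omega_word const_loop
| ow_cons : forall k w, omega_loop k -> omega_word w -> omega_word (concat k w)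
| ow_cons_inv : forall k w, omega_loop k -> omega_word w ->
    omega_word (concat (rev_path k) w).

(* [h] lies in the subgroup P^omega(Z,z0) of pi_1(Z,z0) *)
Definition in_Pomega (h : R -> P) : Prop :=
  is_loop h /\ exists w, omega_word w /\ homotopic h w.
End Gen.

Definition dist2 (p q : R * R) : R :=
  sqrt ((fst p - fst q)^2 + (snd p - snd q)^2).
(* product metric on R^2 x R^2 (induces the product topology) *)
Definition dist22 (p q : (R * R) * (R * R)) : R :=
  Rmax (dist2 (fst p) (fst q)) (dist2 (snd p) (snd q)).

Definition HE (p : R * R) : Prop :=
  exists n : nat, (fst p)^2 + (snd p - / INR (S n))^2 = (/ INR (S n))^2.
Definition HE0 : R * R := (0, 0).
Definition HExHE (p : (R * R) * (R * R)) : Prop := HE (fst p) /\ HE (snd p).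
Definition HExHE0 : (R * R) * (R * R) := (HE0, HE0).

Definition pair_path (f g : R -> R * R) : R -> (R * R) * (R * R) :=
  fun t => (f t, g t).

From Pilot Require Import Defs.
From Stdlib Require Import Reals ZArith List Lra Lia Psatz Classical ClassicalEpsilon.
Open Scope R_scope.

(* Let [f] run once around every circle, [C_(n+1)] during [[1/(n+2), 1/(n+1)]], and let [g]
   run once around [C_1]. The loop [(f, g)] is an omega-loop of the product, because the fibres
   of [g] have at most two points. If its class came from [P^w(X) x P^w(X)], then [f] would be
   homotopic to a finite product [w] of omega-loops and their inverses. An omega-loop meets only
   finitely many circles: between a visit to [C_n] and the last zero before it the loop stays on
   [C_n], so distinct circles yield distinct zeros. Hence for a large [n] the retraction of [X]
   onto [C_n] maps [w] to a constant loop, but maps [f] to a loop winding once around [C_n].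
   Winding numbers, computed as sums of small angles along a fine grid, are invariant under
   homotopy in the punctured plane, a contradiction. *)

Lemma dist2_fst (p q : R * R) : Rabs (fst p - fst q) <= dist2 p q.
Proof.
  destruct p as [a b], q as [c d]; unfold dist2; cbn [fst snd].
  rewrite <- sqrt_Rsqr_abs. apply sqrt_le_1_alt. unfold Rsqr.
  pose proof (pow2_ge_0 (b - d)); nra.
Qed.

Lemma dist2_snd (p q : R * R) : Rabs (snd p - snd q) <= dist2 p q.
Proof.
  destruct p as [a b], q as [c d]; unfold dist2; cbn [fst snd].
  rewrite <- sqrt_Rsqr_abs. apply sqrt_le_1_alt. unfold Rsqr.
  pose proof (pow2_ge_0 (a - c)); nra.
Qed.

Lemma dist2_lt (p q : R * R) (e : R) :
  Rabs (fst p - fst q) < e / 2 -> Rabs (snd p - snd q) < e / 2 -> dist2 p q < e.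
Proof.
  destruct p as [a b], q as [c d]; unfold dist2; cbn [fst snd]; intros H1 H2.
  pose proof (Rabs_pos (a - c)); pose proof (Rabs_pos (b - d)).
  rewrite <- (sqrt_Rsqr e) by lra. apply sqrt_lt_1_alt. unfold Rsqr.
  rewrite <- (pow2_abs (a - c)), <- (pow2_abs (b - d)).
  split; [pose proof (pow2_ge_0 (Rabs (a - c))); pose proof (pow2_ge_0 (Rabs (b - d))); lra | nra].
Qed.

Lemma dist2_refl (p : R * R) : dist2 p p = 0.
Proof.
  destruct p as [a b]; unfold dist2; cbn [fst snd].
  replace ((a - a) ^ 2 + (b - b) ^ 2) with 0 by ring. apply sqrt_0.
Qed.

Lemma continuity_pt_elim (f : R -> R) (x : R) : continuity_pt f x ->
  forall e, e > 0 -> exists d, d > 0 /\ forall y, Rabs (y - x) < d -> Rabs (f y - f x) < e.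
Proof.
  intros H e He. destruct (H e He) as [d [Hd Hy]]. exists d; split; [exact Hd|].
  intros y Hyx. destruct (Req_dec x y) as [<-|Hne].
  - now rewrite Rminus_diag, Rabs_R0.
  - apply (Hy y). split; [split; [exact I | exact Hne] | exact Hyx].
Qed.

Lemma pcont_pair (a b : R -> R) :
  (forall x, continuity_pt a x) -> (forall x, continuity_pt b x) ->
  pcont dist2 (fun t => (a t, b t)).
Proof.
  intros Ha Hb t _ e He.
  destruct (continuity_pt_elim a t (Ha t) (e / 2) ltac:(lra)) as [d1 [Hd1 H1]].
  destruct (continuity_pt_elim b t (Hb t) (e / 2) ltac:(lra)) as [d2 [Hd2 H2]].
  exists (Rmin d1 d2); split; [now apply Rmin_pos|].
  intros s _ Hs. apply dist2_lt; cbn [fst snd].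
  - apply H1; eapply Rlt_le_trans; [exact Hs | apply Rmin_l].
  - apply H2; eapply Rlt_le_trans; [exact Hs | apply Rmin_r].
Qed.

Definition cont_on {P Q : Type} (dP : P -> P -> R) (dQ : Q -> Q -> R) (Z : P -> Prop)
    (g : P -> Q) : Prop :=
  forall p, Z p -> forall e, e > 0 ->
    exists d, d > 0 /\ forall q, Z q -> dP q p < d -> dQ (g q) (g p) < e.

Lemma pcont2_comp {P Q : Type} (dP : P -> P -> R) (dQ : Q -> Q -> R) (Z : P -> Prop)
    (g : P -> Q) (H : R -> R -> P) :
  pcont2 dP H -> (forall s t, I01 s -> I01 t -> Z (H s t)) -> cont_on dP dQ Z g ->
  pcont2 dQ (fun s t => g (H s t)).
Proof.
  intros HH HZ Hg s t Hs Ht e He.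
  destruct (Hg (H s t) (HZ s t Hs Ht) e He) as [d1 [Hd1 Hg1]].
  destruct (HH s t Hs Ht d1 Hd1) as [d [Hd Hc]].
  exists d; split; [exact Hd|]. intros s' t' Hs' Ht' H1 H2. apply Hg1; auto.
Qed.

Lemma pcont_reparam {P : Type} (d : P -> P -> R) (k h : R -> P) (phi : R -> R) :
  pcont d k -> (forall t, I01 t -> h t = k (phi t)) -> (forall t, I01 t -> I01 (phi t)) ->
  (forall s t, Rabs (phi s - phi t) <= 2 * Rabs (s - t)) -> pcont d h.
Proof.
  intros Hk Hh Hi Hl t It e He.
  destruct (Hk (phi t) (Hi t It) e He) as [d1 [Hd1 H1]].
  exists (d1 / 2); split; [lra|]. intros s Is Hs. rewrite !Hh by auto.
  apply H1; [auto|]. pose proof (Hl s t). lra.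
Qed.

Lemma inv_INR_S_pos (n : nat) : / INR (S n) > 0.
Proof. apply Rinv_0_lt_compat, lt_0_INR; lia. Qed.

Lemma inv_INR_S_le_1 (n : nat) : / INR (S n) <= 1.
Proof.
  rewrite <- Rinv_1. apply Rinv_le_contravar; [lra|].
  rewrite S_INR; pose proof (pos_INR n); lra.
Qed.

Lemma inv_INR_S_le (m n : nat) : (m <= n)%nat -> / INR (S n) <= / INR (S m).
Proof. intro H. apply Rinv_le_contravar; [apply lt_0_INR; lia | apply le_INR; lia]. Qed.

Lemma inv_INR_S_lt (m n : nat) : (m < n)%nat -> / INR (S n) < / INR (S m).
Proof.
  intro H. apply Rinv_lt_contravar; [apply Rmult_lt_0_compat; apply lt_0_INR; lia|].
  apply lt_INR; lia.
Qed.

Lemma inv_INR_S_small (e : R) : e > 0 -> exists K, / INR (S K) < e.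
Proof.
  intros He. destruct (INR_archimed e 1 He) as [n Hn].
  exists n. rewrite S_INR. pose proof (pos_INR n).
  apply (Rmult_lt_reg_l (INR n + 1)); [lra|]. rewrite Rinv_r by lra. nra.
Qed.

Lemma inv_lt_swap (x y : R) : 0 < x -> / x < y -> / y < x.
Proof.
  intros Hx H. rewrite <- (Rinv_inv x). apply Rinv_lt_contravar; [|exact H].
  assert (0 < / x) by (apply Rinv_0_lt_compat; exact Hx). nra.
Qed.

Lemma inv_le_swap (x y : R) : 0 < x -> 0 < y -> y <= / x -> x <= / y.
Proof. intros Hx Hy H. rewrite <- (Rinv_inv x). apply Rinv_le_contravar; assumption. Qed.

Definition clamp (a b x : R) : R := Rmax a (Rmin b x).

Lemma clamp_in (a b x : R) : a <= b -> a <= clamp a b x <= b.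
Proof.
  intros; unfold clamp. split; [apply Rmax_l | apply Rmax_lub; [assumption | apply Rmin_l]].
Qed.

Lemma clamp_id (a b x : R) : a <= x <= b -> clamp a b x = x.
Proof. intros; unfold clamp. rewrite Rmin_right, Rmax_right; lra. Qed.

Lemma clamp_lo (a b x : R) : x <= a -> a <= b -> clamp a b x = a.
Proof. intros; unfold clamp. rewrite Rmin_right by lra. apply Rmax_left; lra. Qed.

Lemma clamp_hi (a b x : R) : b <= x -> a <= b -> clamp a b x = b.
Proof. intros; unfold clamp. rewrite Rmin_left by lra. apply Rmax_right; lra. Qed.

Lemma clamp_lip (a b x y : R) : a <= b -> Rabs (clamp a b x - clamp a b y) <= Rabs (x - y).
Proof.
  intros Hab. pose proof (Rle_abs (x - y)). pose proof (Rle_abs (- (x - y))).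
  rewrite Rabs_Ropp in *. unfold clamp, Rmax, Rmin.
  repeat destruct Rle_dec; apply Rabs_le; lra.
Qed.

(** * Angles between plane vectors *)

Lemma atan_sum_bound (x y : R) : x * y < 1 -> - (PI / 2) < atan x + atan y < PI / 2.
Proof.
  assert (Hpos : forall x y, 0 < x -> x * y < 1 -> atan x + atan y < PI / 2).
  { intros a b Ha Hab. assert (Hba : b < / a).
    { apply (Rmult_lt_reg_l a); [exact Ha|]. rewrite Rinv_r by lra. lra. }
    pose proof (atan_increasing _ _ Hba) as Hb. rewrite atan_inv in Hb by exact Ha. lra. }
  intros Hxy. pose proof (atan_bound x); pose proof (atan_bound y).
  destruct (Rtotal_order x 0) as [Hx|[->|Hx]].
  - pose proof (atan_increasing _ _ Hx) as Hax. rewrite atan_0 in Hax.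
    pose proof (Hpos (- x) (- y) ltac:(lra) ltac:(nra)) as Hs. rewrite !atan_opp in Hs. lra.
  - rewrite atan_0. lra.
  - pose proof (atan_increasing _ _ Hx) as Hax. rewrite atan_0 in Hax.
    pose proof (Hpos x y Hx Hxy). lra.
Qed.

Lemma atan_add (x y : R) : x * y < 1 -> atan x + atan y = atan ((x + y) / (1 - x * y)).
Proof.
  intros Hxy. pose proof (atan_sum_bound x y Hxy) as Hr.
  pose proof (atan_bound x); pose proof (atan_bound y).
  assert (cx : cos (atan x) <> 0) by (apply Rgt_not_eq, cos_gt_0; lra).
  assert (cy : cos (atan y) <> 0) by (apply Rgt_not_eq, cos_gt_0; lra).
  assert (cxy : cos (atan x + atan y) <> 0) by (apply Rgt_not_eq, cos_gt_0; lra).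
  pose proof (tan_plus (atan x) (atan y) cx cy cxy) as T.
  rewrite !tan_atan in T. specialize (T ltac:(lra)).
  rewrite <- T, atan_tan; lra.
Qed.

Definition dot (p q : R * R) : R := fst p * fst q + snd p * snd q.
Definition cross (p q : R * R) : R := fst p * snd q - snd p * fst q.

(* The oriented angle from [p] to [q], correct when [dot p q > 0]. *)
Definition angle (p q : R * R) : R := atan (cross p q / dot p q).

Lemma angle_refl (p : R * R) : angle p p = 0.
Proof.
  destruct p as [a b]; unfold angle, cross, dot; cbn [fst snd].
  replace (a * b - b * a) with 0 by ring. unfold Rdiv; rewrite Rmult_0_l. apply atan_0.
Qed.

Lemma angle_add (p q r : R * R) : dot p q > 0 -> dot q r > 0 -> dot p r > 0 ->
  angle p q + angle q r = angle p r.
Proof.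
  destruct p as [p1 p2], q as [q1 q2], r as [r1 r2]; unfold angle, dot, cross; cbn [fst snd].
  intros H1 H2 H3.
  assert (Hq : q1 * q1 + q2 * q2 > 0).
  { destruct (Req_dec q1 0); destruct (Req_dec q2 0); subst; nra. }
  set (c1 := p1 * q2 - p2 * q1) in *. set (d1 := p1 * q1 + p2 * q2) in *.
  set (c2 := q1 * r2 - q2 * r1) in *. set (d2 := q1 * r1 + q2 * r2) in *.
  assert (E1 : c1 * d2 + c2 * d1 = (q1 * q1 + q2 * q2) * (p1 * r2 - p2 * r1))
    by (unfold c1, c2, d1, d2; ring).
  assert (E2 : d1 * d2 - c1 * c2 = (q1 * q1 + q2 * q2) * (p1 * r1 + p2 * r2))
    by (unfold c1, c2, d1, d2; ring).
  assert (Hxy : c1 / d1 * (c2 / d2) < 1).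
  { replace (c1 / d1 * (c2 / d2)) with ((c1 * c2) / (d1 * d2)) by (field; lra).
    apply (Rmult_lt_reg_r (d1 * d2)); [nra|].
    unfold Rdiv. rewrite Rmult_assoc, Rinv_l by nra. nra. }
  rewrite atan_add by exact Hxy. f_equal.
  replace (1 - c1 / d1 * (c2 / d2)) with ((d1 * d2 - c1 * c2) / (d1 * d2)) by (field; lra).
  replace (c1 / d1 + c2 / d2) with ((c1 * d2 + c2 * d1) / (d1 * d2)) by (field; lra).
  rewrite E1, E2. field. split; nra.
Qed.

(* Polar coordinates with the angle measured from the downward direction. *)
Definition polar (r a : R) : R * R := (r * sin a, - r * cos a).

Lemma angle_polar (r a b : R) : r > 0 -> Rabs (b - a) < PI / 2 ->
  angle (polar r a) (polar r b) = b - a.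
Proof.
  intros Hr Hab. unfold angle, cross, dot, polar; cbn [fst snd].
  apply Rabs_def2 in Hab.
  assert (Hc : cos (b - a) > 0) by (apply cos_gt_0; lra).
  replace (r * sin a * (- r * cos b) - - r * cos a * (r * sin b)) with (r * r * sin (b - a))
    by (rewrite sin_minus; ring).
  replace (r * sin a * (r * sin b) + - r * cos a * (- r * cos b)) with (r * r * cos (b - a))
    by (rewrite cos_minus; ring).
  replace (r * r * sin (b - a) / (r * r * cos (b - a))) with (tan (b - a))
    by (unfold tan; field; split; lra).
  apply atan_tan; lra.
Qed.

Lemma dot_pos_near (w : R * R) : dot w w > 0 -> exists eta, eta > 0 /\
  forall p q, dist2 p w < eta -> dist2 q w < eta -> dot p q > 0.
Proof.
  destruct w as [w1 w2]; unfold dot; cbn [fst snd]; intros Hw.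
  set (W := w1 * w1 + w2 * w2) in *.
  set (M := Rabs w1 + Rabs w2 + 1).
  pose proof (Rabs_pos w1); pose proof (Rabs_pos w2).
  assert (HM : M > 0) by (unfold M; lra).
  set (eta := Rmin 1 (W / (4 * M))).
  assert (Heta : eta > 0) by (apply Rmin_pos; [lra | apply Rdiv_lt_0_compat; lra]).
  assert (He1 : eta <= 1) by apply Rmin_l.
  assert (He2 : eta * M <= W / 4).
  { assert (Hle : eta <= W / (4 * M)) by apply Rmin_r.
    apply (Rmult_le_compat_r M) in Hle; [|lra].
    replace (W / (4 * M) * M) with (W / 4) in Hle by (field; lra). exact Hle. }
  exists eta; split; [exact Heta|].
  intros [p1 p2] [q1 q2] Hp Hq; cbn [fst snd].
  assert (prod_lb : forall a b, Rabs b < eta -> a * b >= - (Rabs a * eta)).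
  { intros a b Hb. pose proof (Rabs_pos a) as Ha. pose proof (Rle_abs (- (a * b))) as Hab.
    rewrite Rabs_Ropp, Rabs_mult in Hab. nra. }
  pose proof (Rle_lt_trans _ _ _ (dist2_fst _ _) Hp) as H1; cbn [fst] in H1.
  pose proof (Rle_lt_trans _ _ _ (dist2_snd _ _) Hp) as H2; cbn [snd] in H2.
  pose proof (Rle_lt_trans _ _ _ (dist2_fst _ _) Hq) as H3; cbn [fst] in H3.
  pose proof (Rle_lt_trans _ _ _ (dist2_snd _ _) Hq) as H4; cbn [snd] in H4.
  set (e1 := p1 - w1) in *. set (e2 := p2 - w2) in *.
  set (f1 := q1 - w1) in *. set (f2 := q2 - w2) in *.
  replace (p1 * q1 + p2 * q2) with (W + w1 * e1 + w1 * f1 + w2 * e2 + w2 * f2 + e1 * f1 + e2 * f2)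
    by (unfold W, e1, e2, f1, f2; ring).
  pose proof (prod_lb w1 e1 H1). pose proof (prod_lb w1 f1 H3).
  pose proof (prod_lb w2 e2 H2). pose proof (prod_lb w2 f2 H4).
  pose proof (prod_lb e1 f1 H3). pose proof (prod_lb e2 f2 H4).
  assert (Rabs e1 * eta <= eta * eta) by (pose proof (Rabs_pos e1); nra).
  assert (Rabs e2 * eta <= eta * eta) by (pose proof (Rabs_pos e2); nra).
  unfold M in He2. nra.
Qed.

Lemma ValAdh_near (u : nat -> R) (l : R) : ValAdh u l ->
  forall e, e > 0 -> forall N, exists p, (N <= p)%nat /\ Rabs (u p - l) < e.
Proof.
  intros H e He N. destruct (H (disc l (mkposreal e He)) N) as [p [Hp Hv]].
  - exists (mkposreal e He). intros y Hy; exact Hy.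
  - exists p; split; auto.
Qed.

Lemma ValAdh_I01 (u : nat -> R) (l : R) : ValAdh u l -> (forall n, I01 (u n)) -> I01 l.
Proof.
  intros H Hu. split; apply Rnot_lt_le; intro Hl.
  - destruct (ValAdh_near u l H (- l) ltac:(lra) 0) as [p [_ Hp]].
    specialize (Hu p). unfold I01 in Hu. apply Rabs_def2 in Hp. lra.
  - destruct (ValAdh_near u l H (l - 1) ltac:(lra) 0) as [p [_ Hp]].
    specialize (Hu p). unfold I01 in Hu. apply Rabs_def2 in Hp. lra.
Qed.

Lemma square_cluster_point (u v : nat -> R) : (forall n, I01 (u n) /\ I01 (v n)) ->
  exists a b, I01 a /\ I01 b /\ forall e, e > 0 -> forall N,
    exists p, (N <= p)%nat /\ Rabs (u p - a) < e /\ Rabs (v p - b) < e.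
Proof.
  intros Huv.
  destruct (Bolzano_Weierstrass u (fun c => 0 <= c <= 1) (compact_P3 0 1)) as [a Ha].
  { intro n; apply Huv. }
  destruct (choice (fun k p => (k <= p)%nat /\ Rabs (u p - a) < / INR (S k))) as [phi Hphi].
  { intro k. apply (ValAdh_near _ _ Ha). apply inv_INR_S_pos. }
  destruct (Bolzano_Weierstrass (fun k => v (phi k)) (fun c => 0 <= c <= 1) (compact_P3 0 1))
    as [b Hb].
  { intro n; apply Huv. }
  exists a, b. split; [apply (ValAdh_I01 _ _ Ha); intro n; apply Huv|].
  split; [apply (ValAdh_I01 _ _ Hb); intro n; apply Huv|].
  intros e He N. destruct (inv_INR_S_small e He) as [K HK].
  destruct (ValAdh_near _ _ Hb e He (Nat.max N K)) as [k [Hk Hvk]].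
  destruct (Hphi k) as [Hpk Hupk]. pose proof (inv_INR_S_le K k ltac:(lia)).
  exists (phi k). repeat split; [lia | lra | exact Hvk].
Qed.

Lemma pcont2_dot_pos_uniform (F : R -> R -> R * R) : pcont2 dist2 F ->
  (forall s t, I01 s -> I01 t -> dot (F s t) (F s t) > 0) ->
  exists delta, delta > 0 /\ forall s t s' t', I01 s -> I01 t -> I01 s' -> I01 t' ->
    Rabs (s - s') < delta -> Rabs (t - t') < delta -> dot (F s t) (F s' t') > 0.
Proof.
  intros HF Hnz. apply NNPP. intro Hn.
  assert (Hbad : forall n, exists x : (R * R) * (R * R),
    let '((s, t), (s', t')) := x in
    I01 s /\ I01 t /\ I01 s' /\ I01 t' /\ Rabs (s - s') < / INR (S n) /\
    Rabs (t - t') < / INR (S n) /\ dot (F s t) (F s' t') <= 0).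
  { intro n. apply NNPP. intro Hno. apply Hn. exists (/ INR (S n)).
    split; [apply inv_INR_S_pos|].
    intros s t s' t' Hs Ht Hs' Ht' H1 H2. apply Rnot_le_lt. intro Hle. apply Hno.
    exists ((s, t), (s', t')); tauto. }
  destruct (choice _ Hbad) as [x Hx].
  destruct (square_cluster_point (fun n => fst (fst (x n))) (fun n => snd (fst (x n))))
    as [a [b [Ia [Ib Hab]]]].
  { intro n. specialize (Hx n). destruct (x n) as [[s t] [s' t']]; cbn; tauto. }
  destruct (dot_pos_near (F a b) (Hnz a b Ia Ib)) as [eta [Heta Hnear]].
  destruct (HF a b Ia Ib eta Heta) as [dc [Hdc Hc]].
  destruct (inv_INR_S_small (dc / 2) ltac:(lra)) as [K HK].
  destruct (Hab (dc / 2) ltac:(lra) K) as [p [Hp [Hs Ht]]].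
  specialize (Hx p). pose proof (inv_INR_S_le K p Hp).
  destruct (x p) as [[s t] [s' t']]; cbn in Hs, Ht.
  destruct Hx as (Is & It & Is' & It' & Hss & Htt & Hdot).
  apply Rabs_def2 in Hs, Ht, Hss, Htt.
  assert (dot (F s t) (F s' t') > 0).
  { apply Hnear; apply Hc; auto; apply Rabs_def1; lra. }
  lra.
Qed.

(** * Discrete winding sums *)

Fixpoint psum (F : nat -> R) (n : nat) : R :=
  match n with O => 0 | S m => psum F m + F m end.

Lemma psum_ext (F G : nat -> R) (n : nat) :
  (forall k, (k < n)%nat -> F k = G k) -> psum F n = psum G n.
Proof.
  induction n as [|n IH]; intros H; cbn; [reflexivity|].
  rewrite IH by (intros; apply H; lia). rewrite H by lia. reflexivity.
Qed.

Lemma psum_telescope (g : nat -> R) (n : nat) : psum (fun k => g (S k) - g k) n = g n - g O.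
Proof. induction n as [|n IH]; cbn; [ring | rewrite IH; ring]. Qed.

Lemma psum_minus (F G : nat -> R) (n : nat) :
  psum (fun k => F k - G k) n = psum F n - psum G n.
Proof. induction n as [|n IH]; cbn; [ring | rewrite IH; ring]. Qed.

Lemma grid_I01 (N j : nat) : (0 < N)%nat -> (j <= N)%nat -> I01 (INR j / INR N).
Proof.
  intros HN Hj. assert (HN' : INR N > 0) by (apply lt_0_INR; lia).
  split; [apply Rmult_le_pos; [apply pos_INR | left; apply Rinv_0_lt_compat; exact HN']|].
  apply (Rmult_le_reg_r (INR N)); [exact HN'|]. unfold Rdiv; rewrite Rmult_assoc, Rinv_l by lra.
  rewrite Rmult_1_l, Rmult_1_r. apply le_INR; exact Hj.
Qed.

Lemma grid_step (N j : nat) : (0 < N)%nat -> Rabs (INR j / INR N - INR (S j) / INR N) = / INR N.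
Proof.
  intros HN. assert (HN' : INR N > 0) by (apply lt_0_INR; lia).
  rewrite S_INR. replace (INR j / INR N - (INR j + 1) / INR N) with (- / INR N) by (field; lra).
  rewrite Rabs_Ropp. apply Rabs_right. left; apply Rinv_0_lt_compat; exact HN'.
Qed.

Lemma grid_ends (N : nat) : (0 < N)%nat -> INR 0 / INR N = 0 /\ INR N / INR N = 1.
Proof.
  intros HN. assert (INR N > 0) by (apply lt_0_INR; lia).
  split; [cbn; apply Rdiv_0_l | field; lra].
Qed.

(* Sum of the angles swept by [u] between consecutive points of the grid of mesh [1/N];
   for fine grids and [u] avoiding the origin this is [2 PI] times the winding number. *)
Definition winding_sum (u : R -> R * R) (N : nat) : R :=
  psum (fun k => angle (u (INR k / INR N)) (u (INR (S k) / INR N))) N.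

Lemma winding_sum_ext (u v : R -> R * R) (N : nat) :
  (forall t, I01 t -> u t = v t) -> winding_sum u N = winding_sum v N.
Proof.
  intros H. unfold winding_sum. apply psum_ext. intros k Hk.
  rewrite !H by (apply grid_I01; lia). reflexivity.
Qed.

Lemma winding_sum_const (p : R * R) (N : nat) : winding_sum (fun _ => p) N = 0.
Proof.
  unfold winding_sum. rewrite (psum_ext _ (fun k => (fun _ => 0) (S k) - (fun _ => 0) k)).
  - rewrite (psum_telescope (fun _ => 0)). ring.
  - intros; rewrite angle_refl; ring.
Qed.

Lemma winding_sum_polar (Th : R -> R) (r L : R) (N : nat) : r > 0 ->
  (forall s t, Rabs (Th s - Th t) <= L * Rabs (s - t)) -> (0 < N)%nat -> L / INR N < PI / 2 ->
  winding_sum (fun t => polar r (Th t)) N = Th 1 - Th 0.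
Proof.
  intros Hr HLip HN HLN. unfold winding_sum. destruct (grid_ends N HN) as [E0 E1].
  rewrite (psum_ext _ (fun k => Th (INR (S k) / INR N) - Th (INR k / INR N))).
  - rewrite (psum_telescope (fun k => Th (INR k / INR N))). cbv beta. rewrite E0, E1. reflexivity.
  - intros k Hk. apply angle_polar; [exact Hr|].
    eapply Rle_lt_trans; [apply HLip|]. rewrite Rabs_minus_sym, grid_step by exact HN.
    exact HLN.
Qed.

Section HomotopyInvariance.

Variable F : R -> R -> R * R.
Hypothesis F_cont : pcont2 dist2 F.
Hypothesis F_nonzero : forall s t, I01 s -> I01 t -> dot (F s t) (F s t) > 0.
Hypothesis F_loop : forall s, I01 s -> F s 0 = F s 1.

(* Across one thin column of the grid, the angle sums along the two sides differ by a
   telescoping sum of the angle defects of the small cells, which all vanish. *)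
Lemma winding_sum_column (delta s s' : R) (N : nat) :
  (forall s t s' t', I01 s -> I01 t -> I01 s' -> I01 t' ->
     Rabs (s - s') < delta -> Rabs (t - t') < delta -> dot (F s t) (F s' t') > 0) ->
  I01 s -> I01 s' -> Rabs (s - s') < delta -> (0 < N)%nat -> / INR N < delta ->
  winding_sum (F s) N = winding_sum (F s') N.
Proof.
  intros Hdp Is Is' Hss' HN Hstep.
  assert (Hd : delta > 0) by (pose proof (Rabs_pos (s - s')); lra).
  assert (Hrefl : forall x, Rabs (x - x) < delta)
    by (intro x; rewrite Rminus_diag, Rabs_R0; exact Hd).
  assert (Hs's : Rabs (s' - s) < delta) by (rewrite Rabs_minus_sym; exact Hss').
  apply Rminus_diag_uniq. unfold winding_sum. rewrite <- psum_minus.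
  set (g := fun k => angle (F s (INR k / INR N)) (F s' (INR k / INR N))).
  rewrite (psum_ext _ (fun k => (fun j => - g j) (S k) - (fun j => - g j) k)).
  - rewrite (psum_telescope (fun j => - g j)). unfold g. destruct (grid_ends N HN) as [E0 E1].
    rewrite E0, E1, (F_loop s Is), (F_loop s' Is'). ring.
  - intros k Hk. unfold g.
    set (t := INR k / INR N). set (t' := INR (S k) / INR N).
    assert (It : I01 t) by (apply grid_I01; lia). assert (It' : I01 t') by (apply grid_I01; lia).
    assert (Htt' : Rabs (t - t') < delta) by (unfold t, t'; rewrite grid_step; auto).
    assert (Ht't : Rabs (t' - t) < delta) by (rewrite Rabs_minus_sym; exact Htt').
    cbv beta; fold t t'.
    pose proof (angle_add (F s t) (F s t') (F s' t')) as E1.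
    pose proof (angle_add (F s t) (F s' t) (F s' t')) as E2.
    assert (angle (F s t) (F s t') + angle (F s t') (F s' t') =
            angle (F s t) (F s' t) + angle (F s' t) (F s' t'))
      by (rewrite E1, E2 by (apply Hdp; auto); reflexivity).
    lra.
Qed.

Lemma winding_sum_homotopy :
  exists N0, forall N, (N0 <= N)%nat -> winding_sum (F 0) N = winding_sum (F 1) N.
Proof.
  destruct (pcont2_dot_pos_uniform F F_cont F_nonzero) as [delta [Hd Hdp]].
  destruct (inv_INR_S_small delta Hd) as [K HK].
  exists (S K). intros N HN.
  assert (HN0 : (0 < N)%nat) by lia.
  assert (Hstep : / INR N < delta).
  { eapply Rle_lt_trans; [|exact HK]. replace N with (S (pred N)) by lia.
    apply inv_INR_S_le; lia. }
  assert (Hcol : forall i, (i <= N)%nat ->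
            winding_sum (F (INR 0 / INR N)) N = winding_sum (F (INR i / INR N)) N).
  { induction i as [|i IH]; intros Hi; [reflexivity|].
    rewrite IH by lia. apply (winding_sum_column delta); auto; try (apply grid_I01; lia).
    rewrite grid_step; auto. }
  destruct (grid_ends N HN0) as [E0 E1].
  specialize (Hcol N (le_n N)). rewrite E0, E1 in Hcol. exact Hcol.
Qed.

End HomotopyInvariance.

(** * Circles of the Hawaiian earring and retractions onto them *)

Notation radius n := (/ INR (S n)).

(* [on_circle n] is the circle [C_(n+1)] of the statement. *)
Definition on_circle (n : nat) (p : R * R) : Prop :=
  (fst p) ^ 2 + (snd p - radius n) ^ 2 = (radius n) ^ 2.

Lemma on_circle_0 (n : nat) : on_circle n (0, 0).
Proof. unfold on_circle; cbn [fst snd]; ring. Qed.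

Lemma on_circle_eq (n : nat) (p : R * R) :
  on_circle n p -> (fst p) ^ 2 + (snd p) ^ 2 = 2 * radius n * snd p.
Proof. unfold on_circle; lra. Qed.

Lemma on_circle_snd_pos (n : nat) (p : R * R) : on_circle n p -> p <> (0, 0) -> snd p > 0.
Proof.
  destruct p as [x y]; intros H Hp. apply on_circle_eq in H. cbn [fst snd] in *.
  pose proof (inv_INR_S_pos n). apply Rnot_le_lt; intro Hy. apply Hp.
  assert (x = 0) by nra. assert (y = 0) by nra. subst; reflexivity.
Qed.

Lemma on_two_circles (m n : nat) (p : R * R) :
  on_circle m p -> on_circle n p -> m <> n -> p = (0, 0).
Proof.
  destruct p as [x y]; intros H1 H2 Hmn. apply on_circle_eq in H1, H2. cbn [fst snd] in *.
  assert (Hr : radius m <> radius n).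
  { intro E. apply Rinv_eq_reg, INR_eq in E. lia. }
  assert (Hy : y * (radius m - radius n) = 0) by nra.
  destruct (Rmult_integral _ _ Hy) as [->|E]; [|exfalso; apply Hr; lra].
  assert (x = 0) as -> by nra. reflexivity.
Qed.

Lemma radius_gap (j m : nat) : j <> m -> Rabs (radius j - radius m) >= radius m - radius (S m).
Proof.
  intros Hjm. rewrite !S_INR. pose proof (pos_INR m). pose proof (pos_INR j).
  destruct (Nat.lt_ge_cases m j) as [Hlt|Hge].
  - assert (INR m + 1 <= INR j) by (rewrite <- S_INR; apply le_INR; lia).
    assert (/ (INR j + 1) <= / (INR m + 1 + 1)) by (apply Rinv_le_contravar; lra).
    assert (/ (INR j + 1) < / (INR m + 1)) by (apply Rinv_lt_contravar; nra).
    rewrite Rabs_left by lra. lra.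
  - assert (INR j + 1 <= INR m) by (rewrite <- S_INR; apply le_INR; lia).
    assert (/ INR m <= / (INR j + 1)) by (apply Rinv_le_contravar; lra).
    assert (/ (INR m + 1) < / (INR j + 1)) by (apply Rinv_lt_contravar; nra).
    rewrite Rabs_right by lra.
    assert (/ INR m - / (INR m + 1) >= / (INR m + 1) - / (INR m + 1 + 1)).
    { replace (/ INR m - / (INR m + 1)) with (/ (INR m * (INR m + 1))) by (field; lra).
      replace (/ (INR m + 1) - / (INR m + 1 + 1)) with (/ ((INR m + 1) * (INR m + 1 + 1)))
        by (field; lra).
      apply Rle_ge, Rinv_le_contravar; nra. }
    lra.
Qed.

Lemma on_circle_defect (m : nat) (p q : R * R) : on_circle m p -> dist2 q p <= 1 ->
  Rabs ((fst q) ^ 2 + (snd q) ^ 2 - 2 * radius m * snd q)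
    <= dist2 q p * (2 * Rabs (fst p) + 2 * Rabs (snd p) + 2 * radius m + 2).
Proof.
  intros Hp Hd. pose proof (on_circle_eq m p Hp) as Ep.
  pose proof (dist2_fst q p) as dx. pose proof (dist2_snd q p) as dy.
  destruct p as [xp yp], q as [xq yq]; cbn [fst snd] in *. set (d := dist2 (xq, yq) (xp, yp)) in *.
  pose proof (inv_INR_S_pos m).
  assert (Gid : xq ^ 2 + yq ^ 2 - 2 * radius m * yq
                = (xq - xp) * (xq + xp) + (yq - yp) * (yq + yp - 2 * radius m)) by nra.
  assert (B1 : Rabs (xq + xp) <= 2 * Rabs xp + 1).
  { replace (xq + xp) with ((xq - xp) + 2 * xp) by ring.
    eapply Rle_trans; [apply Rabs_triang|]. rewrite Rabs_mult, (Rabs_right 2) by lra. lra. }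
  assert (B2 : Rabs (yq + yp - 2 * radius m) <= 2 * Rabs yp + 1 + 2 * radius m).
  { replace (yq + yp - 2 * radius m) with ((yq - yp) + 2 * yp + - (2 * radius m)) by ring.
    eapply Rle_trans; [apply Rabs_triang|].
    rewrite Rabs_Ropp, (Rabs_right (2 * radius m)) by lra.
    apply Rplus_le_compat_r. eapply Rle_trans; [apply Rabs_triang|].
    rewrite Rabs_mult, (Rabs_right 2) by lra. lra. }
  rewrite Gid. eapply Rle_trans; [apply Rabs_triang|]. rewrite !Rabs_mult.
  assert (Rabs (xq - xp) * Rabs (xq + xp) <= d * (2 * Rabs xp + 1))
    by (apply Rmult_le_compat; auto using Rabs_pos).
  assert (Rabs (yq - yp) * Rabs (yq + yp - 2 * radius m) <= d * (2 * Rabs yp + 1 + 2 * radius m))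
    by (apply Rmult_le_compat; auto using Rabs_pos).
  lra.
Qed.

(* Away from the origin, nearby points of the earring lie on the same circle: on another circle
   the defect of the equation of [on_circle m] is at least [2 (radius m - radius (S m)) y]. *)
Lemma circle_isolated (m : nat) (p : R * R) : on_circle m p -> p <> (0, 0) ->
  exists d, d > 0 /\ forall j q, on_circle j q -> dist2 q p < d -> j = m.
Proof.
  intros Hp Hp0. pose proof (on_circle_snd_pos m p Hp Hp0) as Hy.
  set (K := 2 * Rabs (fst p) + 2 * Rabs (snd p) + 2 * radius m + 2).
  set (g := radius m - radius (S m)).
  pose proof (inv_INR_S_pos m). pose proof (Rabs_pos (fst p)). pose proof (Rabs_pos (snd p)).
  assert (Hg : g > 0) by (apply Rgt_minus, inv_INR_S_lt; lia).
  assert (HK : K > 0) by (unfold K; lra).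
  set (d := Rmin 1 (Rmin (snd p / 2) (g * snd p / (2 * K)))).
  assert (d1 : d <= 1) by apply Rmin_l.
  assert (d2 : d <= snd p / 2) by (eapply Rle_trans; [apply Rmin_r | apply Rmin_l]).
  assert (d3 : d * K <= g * snd p / 2).
  { assert (Hle : d <= g * snd p / (2 * K)) by (eapply Rle_trans; [apply Rmin_r | apply Rmin_r]).
    apply (Rmult_le_compat_r K) in Hle; [|lra].
    replace (g * snd p / (2 * K) * K) with (g * snd p / 2) in Hle by (field; lra). exact Hle. }
  exists d. split; [repeat apply Rmin_pos; try apply Rdiv_lt_0_compat; nra|].
  intros j q Hq Hd. destruct (Nat.eq_dec j m) as [|Hne]; [assumption|]. exfalso.
  pose proof (on_circle_defect m p q Hp ltac:(lra)) as T. fold K in T.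
  rewrite (on_circle_eq j q Hq) in T.
  pose proof (Rle_lt_trans _ _ _ (dist2_snd q p) Hd) as dy. apply Rabs_def2 in dy.
  pose proof (radius_gap j m Hne) as Hgap. fold g in Hgap.
  replace (2 * radius j * snd q - 2 * radius m * snd q) with (2 * (radius j - radius m) * snd q)
    in T by ring.
  rewrite !Rabs_mult, (Rabs_right 2), (Rabs_right (snd q)) in T by lra.
  assert (dist2 q p * K < d * K) by (apply Rmult_lt_compat_r; lra).
  nra.
Qed.

Definition retract (n : nat) (p : R * R) : R * R :=
  if Req_EM_T ((fst p) ^ 2 + (snd p - radius n) ^ 2) ((radius n) ^ 2) then p else (0, 0).

Lemma retract_on (n : nat) (p : R * R) : on_circle n p -> retract n p = p.
Proof. intros H; unfold retract. destruct (Req_EM_T _ _); [reflexivity | contradiction]. Qed.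

Lemma retract_off (n : nat) (p : R * R) : ~ on_circle n p -> retract n p = (0, 0).
Proof. intros H; unfold retract. destruct (Req_EM_T _ _); [contradiction | reflexivity]. Qed.

Lemma retract_on_circle (n : nat) (p : R * R) : on_circle n (retract n p).
Proof. unfold retract. destruct (Req_EM_T _ _); [assumption | apply on_circle_0]. Qed.

Lemma retract_other (n j : nat) (p : R * R) : on_circle j p -> j <> n -> retract n p = (0, 0).
Proof.
  intros Hj Hne. destruct (classic (on_circle n p)) as [Hn|Hn].
  - rewrite retract_on by exact Hn. exact (on_two_circles j n p Hj Hn Hne).
  - exact (retract_off n p Hn).
Qed.

Lemma retract_cont (n : nat) : cont_on dist2 dist2 HE (retract n).
Proof.
  intros p Hp e He. destruct (classic (p = (0, 0))) as [->|Hp0].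
  - exists e; split; [exact He|]. intros q _ Hd.
    rewrite (retract_on n (0, 0) (on_circle_0 n)). unfold retract.
    destruct (Req_EM_T _ _); [exact Hd | rewrite dist2_refl; exact He].
  - destruct Hp as [m Hm]. destruct (circle_isolated m p Hm Hp0) as [d1 [Hd1 Hg]].
    exists (Rmin e d1). split; [now apply Rmin_pos|].
    intros q [j Hj] Hd. assert (j = m) as ->.
    { apply (Hg j q Hj). eapply Rlt_le_trans; [exact Hd | apply Rmin_r]. }
    destruct (Nat.eq_dec m n) as [->|Hne].
    + rewrite !retract_on by assumption. eapply Rlt_le_trans; [exact Hd | apply Rmin_l].
    + rewrite !(retract_other n m) by assumption. rewrite dist2_refl; exact He.
Qed.

Definition centred_retract (n : nat) (p : R * R) : R * R :=
  (fst (retract n p), snd (retract n p) - radius n).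

Lemma centred_retract_other (n j : nat) (p : R * R) : on_circle j p -> j <> n ->
  centred_retract n p = centred_retract n (0, 0).
Proof.
  intros Hj Hne. unfold centred_retract.
  rewrite (retract_other n j p Hj Hne), retract_on by apply on_circle_0. reflexivity.
Qed.

Lemma centred_retract_nonzero (n : nat) (p : R * R) :
  dot (centred_retract n p) (centred_retract n p) > 0.
Proof.
  pose proof (retract_on_circle n p) as H. unfold on_circle in H.
  unfold centred_retract, dot; cbn [fst snd]. pose proof (inv_INR_S_pos n). nra.
Qed.

Lemma centred_retract_cont (n : nat) : cont_on dist2 dist2 HE (centred_retract n).
Proof.
  intros p Hp e He. destruct (retract_cont n p Hp e He) as [d [Hd H]].
  exists d; split; [exact Hd|]. intros q Hq Hdq.
  replace (dist2 (centred_retract n q) (centred_retract n p))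
    with (dist2 (retract n q) (retract n p)) by (unfold dist2, centred_retract; cbn; f_equal; ring).
  auto.
Qed.

Lemma homotopic_winding_sum (n : nat) (f g : R -> R * R) : homotopic dist2 HE HE0 f g ->
  exists N0, forall N, (N0 <= N)%nat ->
    winding_sum (fun t => centred_retract n (f t)) N =
    winding_sum (fun t => centred_retract n (g t)) N.
Proof.
  intros [H [Hc [HZ [Hfg Hend]]]].
  destruct (winding_sum_homotopy (fun s t => centred_retract n (H s t))) as [N0 HN0].
  - apply (pcont2_comp dist2 dist2 HE); auto. apply centred_retract_cont.
  - intros; apply centred_retract_nonzero.
  - intros s Hs. destruct (Hend s Hs) as [E1 E2]. cbv beta. rewrite E1, E2. reflexivity.
  - exists N0. intros N HN. specialize (HN0 N HN).
    rewrite (winding_sum_ext _ (fun t => centred_retract n (H 0 t))), HN0.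
    + apply winding_sum_ext. intros t Ht. destruct (Hfg t Ht) as [_ ->]. reflexivity.
    + intros t Ht. destruct (Hfg t Ht) as [-> _]. reflexivity.
Qed.

Lemma homotopic_fst (h : R -> (R * R) * (R * R)) (f g : R -> R * R) :
  homotopic dist22 HExHE HExHE0 h (pair_path f g) -> homotopic dist2 HE HE0 (fun t => fst (h t)) f.
Proof.
  intros [H [Hc [HZ [Hfg Hend]]]].
  exists (fun s t => fst (H s t)). split; [|split; [|split]].
  - apply (pcont2_comp dist22 dist2 (fun _ => True)); auto.
    intros p _ e He. exists e; split; [exact He|]. intros q _ Hq.
    eapply Rle_lt_trans; [apply Rmax_l | exact Hq].
  - intros s t Hs Ht. apply (HZ s t Hs Ht).
  - intros t Ht. destruct (Hfg t Ht) as [-> ->]. split; reflexivity.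
  - intros s Hs. destruct (Hend s Hs) as [-> ->]. split; reflexivity.
Qed.

(** * An omega-loop visits only finitely many circles *)

Lemma continuity_pt_clamp (k : R -> R * R) (pr : R * R -> R) (s t : R) :
  pcont dist2 k -> (forall p q, Rabs (pr p - pr q) <= dist2 p q) -> I01 s -> I01 t -> s <= t ->
  forall x, continuity_pt (fun y => pr (k (clamp s t y))) x.
Proof.
  intros Hk Hpr Is It Hst x e He.
  assert (Hin : forall y, I01 (clamp s t y))
    by (intro y; pose proof (clamp_in s t y Hst); unfold I01 in *; lra).
  destruct (Hk _ (Hin x) e He) as [d [Hd H]]. exists d; split; [exact Hd|].
  intros y [_ Hy]. cbn in Hy |- *. unfold R_dist in *.
  eapply Rle_lt_trans; [apply Hpr|]. apply H; [apply Hin|].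
  eapply Rle_lt_trans; [apply clamp_lip; exact Hst | exact Hy].
Qed.

(* Otherwise, by the intermediate value theorem, [phi] would take the value
   [radius (S i) + radius i] lying strictly between two consecutive values [2 radius _]. *)
Lemma continuous_radius_index_const (phi : R -> R) (s t : R) : continuity phi -> s < t ->
  (forall x, s <= x <= t -> exists j, phi x = 2 * radius j) ->
  forall a b, phi s = 2 * radius a -> phi t = 2 * radius b -> a = b.
Proof.
  intros Hc Hst Hv a b Ha Hb. apply NNPP; intro Hne.
  destruct (Nat.max a b) as [|i] eqn:Ei; [lia|].
  set (v := radius (S i) + radius i).
  pose proof (inv_INR_S_lt i (S i) ltac:(lia)).
  assert (Hsign : (phi s - v) * (phi t - v) <= 0).
  { assert (Hab : (a = S i /\ (b <= i)%nat) \/ (b = S i /\ (a <= i)%nat)) by lia.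
    destruct Hab as [[-> Hb']|[-> Ha']].
    - pose proof (inv_INR_S_le b i Hb'). unfold v; nra.
    - pose proof (inv_INR_S_le a i Ha'). unfold v; nra. }
  destruct (IVT_cor (fun x => phi x - v) s t) as [z [Hz Ez]]; [|lra|exact Hsign|].
  { apply continuity_minus; [exact Hc | apply continuity_const; intros ? ?; reflexivity]. }
  destruct (Hv z Hz) as [j Hj]. unfold v in Ez.
  destruct (Nat.le_gt_cases j i) as [Hj'|Hj'].
  - pose proof (inv_INR_S_le j i Hj'). lra.
  - pose proof (inv_INR_S_le (S i) j ltac:(lia)). lra.
Qed.

Definition diameter_at (p : R * R) : R := (fst p * fst p + snd p * snd p) / snd p.

Lemma diameter_at_on_circle (j : nat) (p : R * R) :
  on_circle j p -> p <> (0, 0) -> diameter_at p = 2 * radius j.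
Proof.
  intros H Hp. pose proof (on_circle_snd_pos j p H Hp). apply on_circle_eq in H.
  unfold diameter_at. apply (Rmult_eq_reg_r (snd p)); [|lra].
  unfold Rdiv. rewrite Rmult_assoc, Rinv_l by lra. nra.
Qed.

Lemma arc_stays_on_circle (k : R -> R * R) : pcont dist2 k -> (forall t, I01 t -> HE (k t)) ->
  forall s t a b, I01 s -> I01 t -> s < t -> (forall x, s <= x <= t -> k x <> (0, 0)) ->
  on_circle a (k s) -> on_circle b (k t) -> a = b.
Proof.
  intros Hk HEk s t a b Is It Hst Hnz Ha Hb.
  assert (Hcoord : forall pr : R * R -> R, (forall p q, Rabs (pr p - pr q) <= dist2 p q) ->
            forall x, continuity_pt (fun y => pr (k (clamp s t y))) x)
    by (intros; apply continuity_pt_clamp; auto; lra).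
  apply (continuous_radius_index_const (fun y => diameter_at (k (clamp s t y))) s t);
    [| exact Hst | | |].
  - intro x. pose proof (clamp_in s t x ltac:(lra)) as Hin.
    assert (Ix : I01 (clamp s t x)) by (unfold I01 in *; lra).
    destruct (HEk _ Ix) as [j Hj].
    pose proof (on_circle_snd_pos j _ Hj (Hnz _ Hin)).
    pose proof (Hcoord fst dist2_fst x). pose proof (Hcoord snd dist2_snd x).
    unfold diameter_at. apply continuity_pt_div; [apply continuity_pt_plus| |lra];
      apply continuity_pt_mult || idtac; assumption.
  - intros x Hx. rewrite clamp_id by exact Hx.
    destruct (HEk x ltac:(unfold I01 in *; lra)) as [j Hj].
    exists j. apply diameter_at_on_circle; auto.
  - rewrite clamp_id by lra. apply diameter_at_on_circle; [exact Ha | apply Hnz; lra].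
  - rewrite clamp_id by lra. apply diameter_at_on_circle; [exact Hb | apply Hnz; lra].
Qed.

Lemma In_max_satisfying (P : R -> Prop) (l : list R) : (exists x, In x l /\ P x) ->
  exists x, In x l /\ P x /\ forall y, In y l -> P y -> y <= x.
Proof.
  induction l as [|a l IH]; intros [x [Hx Px]]; [destruct Hx|].
  destruct (classic (exists x, In x l /\ P x)) as [He|Hne].
  - destruct (IH He) as [m [Hm [Pm Hmax]]].
    destruct (classic (P a /\ m <= a)) as [[Pa Hma]|Ha].
    + exists a. split; [left; reflexivity|]. split; [exact Pa|].
      intros y [<-|Hy] Py; [lra | pose proof (Hmax y Hy Py); lra].
    + exists m. split; [right; exact Hm|]. split; [exact Pm|].
      intros y [<-|Hy] Py; [|auto]. apply Rnot_lt_le. intro. apply Ha. split; [exact Py | lra].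
  - destruct Hx as [<-|Hx]; [|exfalso; apply Hne; eauto].
    exists a. split; [left; reflexivity|]. split; [exact Px|].
    intros y [<-|Hy] Py; [lra | exfalso; apply Hne; eauto].
Qed.

Lemma last_zero_before (k : R -> R * R) (l : list R) :
  (forall x, I01 x -> k x = (0, 0) -> In x l) -> k 0 = (0, 0) ->
  forall t, I01 t -> exists z, I01 z /\ z <= t /\ k z = (0, 0) /\
    forall x, I01 x -> k x = (0, 0) -> x <= t -> x <= z.
Proof.
  intros Hl Hk0 t It.
  destruct (In_max_satisfying (fun z => I01 z /\ k z = (0, 0) /\ z <= t) l)
    as [z [_ [[Iz [Ez Lz]] Hmax]]].
  { exists 0. assert (I0 : I01 0) by (unfold I01; lra).
    split; [apply Hl; auto | unfold I01 in It; repeat split; auto; lra]. }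
  exists z. split; [exact Iz|]. split; [exact Lz|]. split; [exact Ez|].
  intros x Ix Ex Hx. apply Hmax; auto.
Qed.

Lemma bounded_of_injective_into_list {A : Type} (P : nat -> Prop) (f : nat -> A) (l : list A) :
  (forall n, P n -> In (f n) l) -> (forall a b, P a -> P b -> f a = f b -> a = b) ->
  exists B, forall n, (B <= n)%nat -> ~ P n.
Proof.
  intros Hin Hinj. apply NNPP. intro Hno.
  assert (Hunb : forall B, exists n, (B <= n)%nat /\ P n).
  { intro B. apply NNPP. intro H. apply Hno. exists B. intros n Hn Pn. apply H. eauto. }
  assert (Hbuild : forall j, exists V, NoDup V /\ length V = j /\ forall n, In n V -> P n).
  { induction j as [|j [V [Hnd [HlV HV]]]].
    - exists nil. split; [constructor|]. split; [reflexivity | intros n []].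
    - destruct (Hunb (S (list_max V))) as [n [Hn Pn]].
      exists (n :: V). split; [|split; [cbn; lia | intros m [<-|Hm]; auto]].
      constructor; [|exact Hnd]. intro HnV.
      pose proof (proj1 (list_max_le V (list_max V)) (le_n _)) as HF.
      rewrite Forall_forall in HF. specialize (HF n HnV). lia. }
  destruct (Hbuild (S (length l))) as [V [Hnd [HlV HV]]].
  assert (Hlen : (length (map f V) <= length l)%nat).
  { apply NoDup_incl_length.
    - apply NoDup_map_NoDup_ForallPairs; [|exact Hnd]. intros a b Ha Hb. apply Hinj; auto.
    - intros y Hy. apply in_map_iff in Hy. destruct Hy as [n [<- Hn]]. auto. }
  rewrite length_map in Hlen. lia.
Qed.

Definition visits (k : R -> R * R) (n : nat) : Prop :=
  exists t, I01 t /\ on_circle n (k t) /\ k t <> (0, 0).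

(* Map each visited circle to the last zero of [k] before a visit; between that zero and the
   visit [k] stays on one circle, so distinct circles get distinct zeros. *)
Lemma finite_fibres_visits_finitely_many (k : R -> R * R) :
  is_loop dist2 HE HE0 k -> finite_fibres k -> exists B, forall n, (B <= n)%nat -> ~ visits k n.
Proof.
  intros [Hk [HEk [Hk0 _]]] Hff. destruct (Hff HE0) as [l Hl].
  set (Q := fun n z => visits k n -> exists t, I01 t /\ on_circle n (k t) /\ k t <> (0, 0) /\
      I01 z /\ z <= t /\ k z = (0, 0) /\
      forall x, I01 x -> k x = (0, 0) -> x <= t -> x <= z).
  destruct (choice Q) as [zf Hzf].
  { intro n. destruct (classic (visits k n)) as [[t [It [Ht Hnz]]]|Hnv].
    - destruct (last_zero_before k l Hl Hk0 t It) as [z Hz].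
      exists z. intros _. exists t. tauto.
    - exists 0. intro; contradiction. }
  apply (bounded_of_injective_into_list (visits k) zf l).
  { intros n Vn. destruct (Hzf n Vn) as (t & _ & _ & _ & Iz & _ & Ez & _). apply Hl; auto. }
  assert (Hcore : forall a b ta tb, ta < tb -> I01 ta -> I01 tb ->
     on_circle a (k ta) -> on_circle b (k tb) -> k ta <> (0, 0) -> zf a = zf b -> zf a <= ta ->
     (forall x, I01 x -> k x = (0, 0) -> x <= tb -> x <= zf b) -> a = b).
  { intros a b ta tb Hlt Ia Ib Ca Cb Nz Ez Lz Hmax.
    apply (arc_stays_on_circle k Hk HEk ta tb a b Ia Ib Hlt); auto.
    intros x Hx Hkx. assert (Ix : I01 x) by (unfold I01 in *; lra).
    pose proof (Hmax x Ix Hkx ltac:(lra)) as Hxz. rewrite <- Ez in Hxz.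
    assert (x = ta) as -> by lra. contradiction. }
  intros a b Va Vb Eab.
  destruct (Hzf a Va) as (ta & Ia & Ca & Na & _ & Lza & _ & Ma).
  destruct (Hzf b Vb) as (tb & Ib & Cb & Nb & _ & Lzb & _ & Mb).
  destruct (Rtotal_order ta tb) as [Hlt|[<-|Hgt]].
  - exact (Hcore a b ta tb Hlt Ia Ib Ca Cb Na Eab Lza Mb).
  - destruct (Nat.eq_dec a b) as [|Hne]; [assumption|].
    exfalso. exact (Na (on_two_circles a b _ Ca Cb Hne)).
  - symmetry. exact (Hcore b a tb ta Hgt Ib Ia Cb Ca Nb (eq_sym Eab) Lzb Ma).
Qed.

Lemma omega_word_retract_trivial (w : R -> R * R) : omega_word dist2 HE HE0 w ->
  exists B, forall n, (B <= n)%nat -> forall t, I01 t -> retract n (w t) = (0, 0).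
Proof.
  assert (Hnv : forall k n t, ~ visits k n -> I01 t -> retract n (k t) = (0, 0)).
  { intros k n t Hv It. destruct (classic (on_circle n (k t))) as [Hon|Hoff].
    - rewrite retract_on by exact Hon. apply NNPP; intro Hnz. apply Hv. exists t; auto.
    - exact (retract_off n _ Hoff). }
  intros Hw; induction Hw as [|k w [Hl Hf] Hw [B IH]|k w [Hl Hf] Hw [B IH]].
  - exists O. intros n _ t _. apply retract_on, on_circle_0.
  - destruct (finite_fibres_visits_finitely_many k Hl Hf) as [B1 HB1].
    exists (Nat.max B B1). intros n Hn t It. unfold Defs.concat. destruct (Rle_dec t (1 / 2)).
    + apply (Hnv k); [apply HB1; lia | unfold I01 in *; lra].
    + apply IH; [lia | unfold I01 in *; lra].
  - destruct (finite_fibres_visits_finitely_many k Hl Hf) as [B1 HB1].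
    exists (Nat.max B B1). intros n Hn t It. unfold Defs.concat, rev_path.
    destruct (Rle_dec t (1 / 2)).
    + apply (Hnv k); [apply HB1; lia | unfold I01 in *; lra].
    + apply IH; [lia | unfold I01 in *; lra].
Qed.

(** * The loop winding once around every circle *)

Definition floorR (x : R) : R := IZR (Int_part x).

Lemma floorR_spec (x : R) : floorR x <= x < floorR x + 1.
Proof. unfold floorR; pose proof (base_Int_part x); lra. Qed.

Lemma floorR_unique (x : R) (n : nat) : INR n <= x < INR n + 1 -> floorR x = INR n.
Proof.
  intros H. unfold floorR. rewrite INR_IZR_INZ in *. f_equal. symmetry. apply Int_part_spec. lra.
Qed.

Lemma floorR_ge_1 (x : R) : 1 <= x -> exists j : nat, floorR x = INR (S j).
Proof.
  intros Hx. pose proof (floorR_spec x). unfold floorR in *.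
  assert (Hz : (0 < Int_part x)%Z) by (apply lt_IZR; lra).
  exists (Z.to_nat (Int_part x - 1)).
  rewrite S_INR, INR_IZR_INZ, Z2Nat.id by lia. rewrite minus_IZR. cbn. ring.
Qed.

Lemma sin_2PI_mult (k : nat) : sin (2 * PI * INR k) = 0.
Proof.
  replace (2 * PI * INR k) with (0 + 2 * INR k * PI) by ring. rewrite sin_period. apply sin_0.
Qed.

Lemma cos_2PI_mult (k : nat) : cos (2 * PI * INR k) = 1.
Proof.
  replace (2 * PI * INR k) with (0 + 2 * INR k * PI) by ring. rewrite cos_period. apply cos_0.
Qed.

(* For [t] in [(1/(j+2), 1/(j+1)]] the point [all_circles t] runs once around the circle of
   radius [1/(j+1)]; note [earring_radius 0 = 0] since [/ 0 = 0]. *)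
Definition earring_radius (t : R) : R := / floorR (/ t).
Definition earring_angle (t : R) : R := 2 * PI * / t.
Definition all_circles (t : R) : R * R :=
  (earring_radius t * sin (earring_angle t), earring_radius t * (1 - cos (earring_angle t))).

Lemma earring_radius_0 : earring_radius 0 = 0.
Proof.
  unfold earring_radius. rewrite Rinv_0.
  replace (floorR 0) with (INR 0) by (symmetry; apply floorR_unique; cbn; lra).
  cbn. apply Rinv_0.
Qed.

Lemma all_circles_0 : all_circles 0 = (0, 0).
Proof. unfold all_circles. rewrite earring_radius_0. f_equal; ring. Qed.

Lemma earring_radius_index (t : R) : 0 < t <= 1 ->
  exists j, floorR (/ t) = INR (S j) /\ earring_radius t = radius j.
Proof.
  intros Ht. assert (1 <= / t) by (rewrite <- Rinv_1; apply Rinv_le_contravar; lra).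
  destruct (floorR_ge_1 _ H) as [j Hj]. exists j. unfold earring_radius. rewrite Hj. auto.
Qed.

Lemma earring_radius_bound (t : R) : I01 t -> 0 <= earring_radius t <= 1.
Proof.
  intros It. destruct (Req_dec t 0) as [->|Ht].
  - rewrite earring_radius_0; lra.
  - destruct (earring_radius_index t ltac:(unfold I01 in It; lra)) as [j [_ ->]].
    pose proof (inv_INR_S_pos j). pose proof (inv_INR_S_le_1 j). lra.
Qed.

Lemma all_circles_on_circle (t : R) (j : nat) :
  0 < t -> floorR (/ t) = INR (S j) -> on_circle j (all_circles t).
Proof.
  intros Ht Hj. unfold on_circle, all_circles, earring_radius. rewrite Hj. cbn [fst snd].
  pose proof (sin2_cos2 (earring_angle t)) as Hsc. unfold Rsqr in Hsc. nra.
Qed.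

Lemma all_circles_HE (t : R) : I01 t -> HE (all_circles t).
Proof.
  intros It. destruct (Req_dec t 0) as [->|Ht].
  - rewrite all_circles_0. exists O. apply on_circle_0.
  - destruct (earring_radius_index t ltac:(unfold I01 in It; lra)) as [j [Hj _]].
    exists j. apply all_circles_on_circle; [unfold I01 in It; lra | exact Hj].
Qed.

Lemma all_circles_1 : all_circles 1 = (0, 0).
Proof.
  unfold all_circles, earring_radius, earring_angle. rewrite Rinv_1.
  replace (floorR 1) with (INR 1) by (symmetry; apply floorR_unique; cbn; lra).
  rewrite Rmult_1_r. replace (2 * PI) with (2 * PI * INR 1) by (cbn; ring).
  rewrite sin_2PI_mult, cos_2PI_mult. f_equal; ring.
Qed.

Lemma continuity_pt_inv_id (t : R) : 0 < t -> continuity_pt (fun x => / x) t.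
Proof.
  intros Ht. apply (continuity_pt_inv (fun x => x)); [|lra].
  apply derivable_continuous_pt, derivable_pt_id.
Qed.

Lemma continuity_pt_earring_angle (f : R -> R) (t : R) : 0 < t -> continuity f ->
  continuity_pt (fun x => f (earring_angle x)) t.
Proof.
  intros Ht Hf. apply (continuity_pt_comp earring_angle f); [|apply Hf].
  apply (continuity_pt_mult (fun _ => 2 * PI) (fun x => / x)).
  - apply continuity_pt_const; intros ? ?; reflexivity.
  - exact (continuity_pt_inv_id t Ht).
Qed.

(* Near [t0 > 0] the radius may jump only where the point is at the origin, so the current
   radius can be used to write [all_circles t0]. *)
Lemma all_circles_local_radius (t0 : R) : 0 < t0 <= 1 -> exists d, d > 0 /\
  forall s, Rabs (s - t0) < d ->
    all_circles t0 = (earring_radius s * sin (earring_angle t0),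
                      earring_radius s * (1 - cos (earring_angle t0))).
Proof.
  intros Ht0. destruct (earring_radius_index t0 Ht0) as [j [Hj _]].
  destruct (Req_dec (/ t0) (INR (S j))) as [Hint|Hnint].
  - assert (Hang : earring_angle t0 = 2 * PI * INR (S j))
      by (unfold earring_angle; rewrite Hint; ring).
    exists t0. split; [lra|]. intros s _. unfold all_circles.
    rewrite Hang, sin_2PI_mult, cos_2PI_mult. f_equal; ring.
  - pose proof (floorR_spec (/ t0)) as Hsp. rewrite Hj in Hsp.
    set (g := Rmin (/ t0 - INR (S j)) (INR (S j) + 1 - / t0)).
    assert (Hg : g > 0) by (apply Rmin_pos; lra).
    destruct (continuity_pt_elim _ _ (continuity_pt_inv_id t0 ltac:(lra)) g Hg) as [d [Hd Hinv]].
    exists d. split; [exact Hd|]. intros s Hs.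
    assert (Hr : earring_radius s = earring_radius t0).
    { unfold earring_radius. f_equal. rewrite Hj. apply floorR_unique.
      specialize (Hinv s Hs). apply Rabs_def2 in Hinv.
      pose proof (Rmin_l (/ t0 - INR (S j)) (INR (S j) + 1 - / t0)) as Hg1.
      pose proof (Rmin_r (/ t0 - INR (S j)) (INR (S j) + 1 - / t0)) as Hg2.
      fold g in Hg1, Hg2. lra. }
    rewrite Hr. reflexivity.
Qed.

Lemma all_circles_cont_0 : forall e, e > 0 -> exists d, d > 0 /\
  forall s, I01 s -> Rabs (s - 0) < d -> dist2 (all_circles s) (all_circles 0) < e.
Proof.
  intros e He. exists (Rmin (1 / 2) (e / 8)). split; [apply Rmin_pos; lra|].
  intros s Is Hs. rewrite all_circles_0.
  rewrite Rminus_0_r, Rabs_right in Hs by (unfold I01 in Is; lra).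
  pose proof (Rmin_l (1 / 2) (e / 8)). pose proof (Rmin_r (1 / 2) (e / 8)).
  destruct (Req_dec s 0) as [->|Hs0]; [rewrite all_circles_0, dist2_refl; exact He|].
  assert (Hsp : 0 < s) by (unfold I01 in Is; lra).
  assert (Hr : earring_radius s <= 2 * s).
  { unfold earring_radius. pose proof (floorR_spec (/ s)).
    assert (2 <= / s) by (replace 2 with (/ (1 / 2)) by field; apply Rinv_le_contravar; lra).
    assert (0 < / (2 * s)) by (apply Rinv_0_lt_compat; lra).
    assert (/ (2 * s) <= floorR (/ s)) by (rewrite Rinv_mult; lra).
    replace (2 * s) with (/ / (2 * s)) by (rewrite Rinv_inv; reflexivity).
    apply Rinv_le_contravar; lra. }
  pose proof (earring_radius_bound s Is).
  assert (Rabs (sin (earring_angle s)) <= 1)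
    by (apply Rabs_le; pose proof (SIN_bound (earring_angle s)); lra).
  assert (Rabs (1 - cos (earring_angle s)) <= 2)
    by (apply Rabs_le; pose proof (COS_bound (earring_angle s)); lra).
  apply dist2_lt; unfold all_circles; cbn [fst snd];
    rewrite Rminus_0_r, Rabs_mult, Rabs_right by lra.
  - pose proof (Rabs_pos (sin (earring_angle s))). nra.
  - pose proof (Rabs_pos (1 - cos (earring_angle s))). nra.
Qed.

Lemma all_circles_cont : pcont dist2 all_circles.
Proof.
  intros t0 It0 e He.
  destruct (Req_dec t0 0) as [->|Ht0]; [exact (all_circles_cont_0 e He)|].
  assert (Hp : 0 < t0) by (unfold I01 in It0; lra).
  destruct (continuity_pt_elim _ _ (continuity_pt_earring_angle sin t0 Hp continuity_sin) (e / 2)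
              ltac:(lra)) as [d1 [Hd1 H1]].
  destruct (continuity_pt_elim _ _ (continuity_pt_earring_angle cos t0 Hp continuity_cos) (e / 2)
              ltac:(lra)) as [d2 [Hd2 H2]].
  destruct (all_circles_local_radius t0 ltac:(unfold I01 in It0; lra)) as [d3 [Hd3 H3]].
  exists (Rmin d1 (Rmin d2 d3)). split; [repeat apply Rmin_pos; assumption|].
  intros s Is Hs.
  pose proof (Rmin_l d1 (Rmin d2 d3)). pose proof (Rmin_r d1 (Rmin d2 d3)).
  pose proof (Rmin_l d2 d3). pose proof (Rmin_r d2 d3).
  specialize (H1 s ltac:(lra)). specialize (H2 s ltac:(lra)). rewrite (H3 s ltac:(lra)).
  pose proof (earring_radius_bound s Is).
  apply dist2_lt; unfold all_circles; cbn [fst snd].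
  - rewrite <- Rmult_minus_distr_l, Rabs_mult, Rabs_right by lra.
    pose proof (Rabs_pos (sin (earring_angle s) - sin (earring_angle t0))). nra.
  - replace (earring_radius s * (1 - cos (earring_angle s)) -
             earring_radius s * (1 - cos (earring_angle t0)))
      with (- (earring_radius s * (cos (earring_angle s) - cos (earring_angle t0)))) by ring.
    rewrite Rabs_Ropp, Rabs_mult, Rabs_right by lra.
    pose proof (Rabs_pos (cos (earring_angle s) - cos (earring_angle t0))). nra.
Qed.

Definition first_circle (t : R) : R * R := (sin (2 * PI * t), 1 - cos (2 * PI * t)).

Lemma first_circle_cont : pcont dist2 first_circle.
Proof.
  assert (Hlin : forall x, continuity_pt (fun t => 2 * PI * t) x).
  { intro x. apply (continuity_pt_mult (fun _ => 2 * PI) (fun t => t)).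
    - apply continuity_pt_const; intros ? ?; reflexivity.
    - apply derivable_continuous_pt, derivable_pt_id. }
  apply pcont_pair; intro x.
  - apply (continuity_pt_comp (fun t => 2 * PI * t) sin); [apply Hlin | apply continuity_sin].
  - apply (continuity_pt_minus (fun _ => 1) (fun t => cos (2 * PI * t))).
    + apply continuity_pt_const; intros ? ?; reflexivity.
    + apply (continuity_pt_comp (fun t => 2 * PI * t) cos); [apply Hlin | apply continuity_cos].
Qed.

Lemma first_circle_HE (t : R) : HE (first_circle t).
Proof.
  exists O. unfold on_circle, first_circle; cbn [fst snd]. cbn [INR]. rewrite Rinv_1.
  pose proof (sin2_cos2 (2 * PI * t)) as Hsc. unfold Rsqr in Hsc. nra.
Qed.

Lemma first_circle_0 : first_circle 0 = (0, 0).
Proof. unfold first_circle. rewrite Rmult_0_r, sin_0, cos_0. f_equal; ring. Qed.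

Lemma first_circle_1 : first_circle 1 = (0, 0).
Proof. unfold first_circle. rewrite Rmult_1_r, sin_2PI, cos_2PI. f_equal; ring. Qed.

Lemma cos_eq_0_2PI (u v : R) : 0 <= u <= 2 * PI -> 0 <= v <= 2 * PI -> cos u = cos v ->
  u = v \/ u = 2 * PI - v.
Proof.
  assert (Hc : forall v, cos (2 * PI - v) = cos v).
  { intro x. rewrite cos_minus, cos_2PI, sin_2PI. ring. }
  pose proof PI_RGT_0. intros Hu Hv E.
  destruct (Rle_dec u PI); destruct (Rle_dec v PI).
  - left. apply cos_inj; lra.
  - right. apply cos_inj; [lra | lra | rewrite Hc; exact E].
  - right. rewrite <- (Hc u) in E. assert (2 * PI - u = v) by (apply cos_inj; lra). lra.
  - left. rewrite <- (Hc u), <- (Hc v) in E.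
    assert (2 * PI - u = 2 * PI - v) by (apply cos_inj; lra). lra.
Qed.

Lemma first_circle_fibre (t t0 : R) : I01 t -> I01 t0 -> first_circle t = first_circle t0 ->
  t = t0 \/ t = 1 - t0.
Proof.
  intros [H1 H2] [H3 H4] E. unfold first_circle in E. injection E as E1 E2.
  pose proof PI_RGT_0.
  destruct (cos_eq_0_2PI (2 * PI * t) (2 * PI * t0)) as [F|F];
    [nra | nra | lra | left | right]; nra.
Qed.

Definition witness_pair : R -> (R * R) * (R * R) := pair_path all_circles first_circle.

Lemma witness_pair_loop : is_loop dist22 HExHE HExHE0 witness_pair.
Proof.
  split; [|split; [|split]].
  - intros t It e He.
    destruct (all_circles_cont t It e He) as [d1 [Hd1 H1]].
    destruct (first_circle_cont t It e He) as [d2 [Hd2 H2]].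
    exists (Rmin d1 d2); split; [now apply Rmin_pos|].
    intros s Is Hs. unfold dist22, witness_pair, pair_path; cbn [fst snd]. apply Rmax_lub_lt.
    + apply H1; [exact Is | eapply Rlt_le_trans; [exact Hs | apply Rmin_l]].
    + apply H2; [exact Is | eapply Rlt_le_trans; [exact Hs | apply Rmin_r]].
  - intros t It. split; [apply all_circles_HE; exact It | apply first_circle_HE].
  - unfold witness_pair, pair_path. rewrite all_circles_0, first_circle_0. reflexivity.
  - unfold witness_pair, pair_path. rewrite all_circles_1, first_circle_1. reflexivity.
Qed.

(* The second coordinate alone already has fibres of at most two points. *)
Lemma witness_pair_finite_fibres : finite_fibres witness_pair.
Proof.
  intros z. destruct (classic (exists t0, I01 t0 /\ witness_pair t0 = z)) as [[t0 [I0 E0]]|Hno].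
  - exists (t0 :: (1 - t0) :: nil). intros t It Et.
    assert (E : first_circle t = first_circle t0) by exact (f_equal snd (eq_trans Et (eq_sym E0))).
    destruct (first_circle_fibre t t0 It I0 E) as [->| ->]; cbn; tauto.
  - exists nil. intros t It Et. exfalso; apply Hno; eauto.
Qed.

Definition witness : R -> (R * R) * (R * R) := Defs.concat witness_pair (const_loop HExHE0).

Lemma witness_eq (t : R) : I01 t -> witness t = witness_pair (clamp 0 1 (2 * t)).
Proof.
  intros [H0 H1]. unfold witness, Defs.concat, const_loop. destruct (Rle_dec t (1 / 2)).
  - rewrite clamp_id by lra. reflexivity.
  - rewrite clamp_hi by lra. symmetry. apply witness_pair_loop.
Qed.

Lemma witness_loop : is_loop dist22 HExHE HExHE0 witness.
Proof.
  destruct witness_pair_loop as [Hc [HZ [H0 H1]]].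
  assert (Hi : forall t, I01 (clamp 0 1 (2 * t)))
    by (intro t; pose proof (clamp_in 0 1 (2 * t)); unfold I01; lra).
  split; [|split; [|split]].
  - apply (pcont_reparam dist22 witness_pair witness (fun t => clamp 0 1 (2 * t)) Hc witness_eq).
    + intros t _; apply Hi.
    + intros s t. eapply Rle_trans; [apply clamp_lip; lra|].
      rewrite <- Rmult_minus_distr_l, Rabs_mult, Rabs_right by lra. lra.
  - intros t It. rewrite witness_eq by exact It. apply HZ, Hi.
  - rewrite witness_eq by (unfold I01; lra). rewrite Rmult_0_r, clamp_id by lra. exact H0.
  - unfold witness, Defs.concat, const_loop. destruct (Rle_dec 1 (1 / 2)); [lra | reflexivity].
Qed.

Lemma witness_Pomega : in_Pomega dist22 HExHE HExHE0 witness.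
Proof.
  split; [exact witness_loop|]. exists witness. split.
  - apply ow_cons; [split; [exact witness_pair_loop | exact witness_pair_finite_fibres]|].
    apply ow_const.
  - destruct witness_loop as [Hc [HZ [H0 H1]]].
    exists (fun _ t => witness t). split; [|split; [|split]]; [|auto..].
    intros s t Is It e He. destruct (Hc t It e He) as [d [Hd H]].
    exists d; split; [exact Hd|]. intros; auto.
Qed.

(* A continuous lift, on [[0, 1]], of the angle of [all_circles] seen on [on_circle n]:
   it sweeps [[2 PI (n+1), 2 PI (n+2)]] backwards while [all_circles] is on that circle and
   is constant elsewhere. The inner clamp keeps it Lipschitz near [0]. *)
Definition lifted_angle (n : nat) (x : R) : R :=
  clamp (2 * PI * INR (S n)) (2 * PI * INR (S (S n))) (2 * PI / clamp (radius (S (S n))) 1 x).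

Lemma two_PI_INR_le (m m' : nat) : (m <= m')%nat -> 2 * PI * INR m <= 2 * PI * INR m'.
Proof. intros H. apply Rmult_le_compat_l; [pose proof PI_RGT_0; lra | apply le_INR; exact H]. Qed.

Lemma lifted_angle_lip (n : nat) (x y : R) :
  Rabs (lifted_angle n x - lifted_angle n y)
    <= (2 * PI / (radius (S (S n)) * radius (S (S n)))) * Rabs (x - y).
Proof.
  unfold lifted_angle. set (eps := radius (S (S n))).
  pose proof (inv_INR_S_pos (S (S n))) as He. pose proof (inv_INR_S_le_1 (S (S n))) as He1.
  fold eps in He, He1. pose proof PI_RGT_0.
  eapply Rle_trans; [apply clamp_lip, two_PI_INR_le; lia|].
  set (x' := clamp eps 1 x). set (y' := clamp eps 1 y).
  assert (Hx : eps <= x' <= 1) by (apply clamp_in; exact He1).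
  assert (Hy : eps <= y' <= 1) by (apply clamp_in; exact He1).
  assert (Hxy : Rabs (x' - y') <= Rabs (x - y)) by (apply clamp_lip; exact He1).
  replace (2 * PI / x' - 2 * PI / y') with (2 * PI * (y' - x') / (x' * y')) by (field; lra).
  unfold Rdiv.
  rewrite Rabs_mult, Rabs_mult, (Rabs_right (2 * PI)), (Rabs_right (/ (x' * y'))), Rabs_minus_sym
    by (apply Rle_ge; try apply Rlt_le, Rinv_0_lt_compat; nra).
  assert (/ (x' * y') <= / (eps * eps)) by (apply Rinv_le_contravar; nra).
  assert (0 <= / (x' * y')) by (apply Rlt_le, Rinv_0_lt_compat; nra).
  pose proof (Rabs_pos (x' - y')).
  assert (Rabs (x' - y') * / (x' * y') <= Rabs (x - y) * / (eps * eps))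
    by (apply Rmult_le_compat; lra).
  nra.
Qed.

Lemma lifted_angle_0 (n : nat) : lifted_angle n 0 = 2 * PI * INR (S (S n)).
Proof.
  pose proof PI_RGT_0. pose proof (inv_INR_S_pos (S (S n))). pose proof (inv_INR_S_le_1 (S (S n))).
  unfold lifted_angle. rewrite (clamp_lo _ 1 0) by lra. unfold Rdiv. rewrite Rinv_inv.
  apply clamp_hi; apply two_PI_INR_le; lia.
Qed.

Lemma lifted_angle_1 (n : nat) : lifted_angle n 1 = 2 * PI * INR (S n).
Proof.
  pose proof PI_RGT_0. pose proof (inv_INR_S_le_1 (S (S n))).
  unfold lifted_angle. rewrite (clamp_hi _ 1 1) by lra. replace (2 * PI / 1) with (2 * PI * INR 1)
    by (cbn; field). apply clamp_lo; apply two_PI_INR_le; lia.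
Qed.

Lemma centred_retract_origin (n k : nat) :
  centred_retract n (0, 0) = polar (radius n) (2 * PI * INR k).
Proof.
  unfold centred_retract, polar. rewrite retract_on by apply on_circle_0. cbn [fst snd].
  rewrite sin_2PI_mult, cos_2PI_mult. f_equal; ring.
Qed.

Lemma lifted_angle_before (n j : nat) (x : R) : 0 < x <= 1 -> floorR (/ x) = INR (S j) ->
  (j < n)%nat -> lifted_angle n x = 2 * PI * INR (S n).
Proof.
  intros Hx Hj Hjn. pose proof PI_RGT_0.
  pose proof (floorR_spec (/ x)) as Hsp. rewrite Hj, <- S_INR in Hsp.
  pose proof (le_INR (S (S j)) (S n) ltac:(lia)).
  pose proof (lt_INR (S n) (S (S (S n))) ltac:(lia)).
  pose proof (inv_lt_swap x (INR (S (S (S n)))) ltac:(lra) ltac:(lra)).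
  unfold lifted_angle. rewrite (clamp_id _ 1 x) by lra.
  apply clamp_lo; [unfold Rdiv; apply Rmult_le_compat_l; lra | apply two_PI_INR_le; lia].
Qed.

Lemma lifted_angle_during (n : nat) (x : R) : 0 < x <= 1 -> floorR (/ x) = INR (S n) ->
  lifted_angle n x = earring_angle x.
Proof.
  intros Hx Hn. pose proof PI_RGT_0.
  pose proof (floorR_spec (/ x)) as Hsp. rewrite Hn, <- S_INR in Hsp.
  pose proof (lt_INR (S (S n)) (S (S (S n))) ltac:(lia)).
  pose proof (inv_lt_swap x (INR (S (S (S n)))) ltac:(lra) ltac:(lra)).
  unfold lifted_angle. rewrite (clamp_id _ 1 x) by lra.
  apply clamp_id. unfold Rdiv. split; apply Rmult_le_compat_l; lra.
Qed.

Lemma lifted_angle_after (n j : nat) (x : R) : 0 < x <= 1 -> floorR (/ x) = INR (S j) ->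
  (n < j)%nat -> lifted_angle n x = 2 * PI * INR (S (S n)).
Proof.
  intros Hx Hj Hnj. pose proof PI_RGT_0.
  pose proof (floorR_spec (/ x)) as Hsp. rewrite Hj in Hsp.
  pose proof (le_INR (S (S n)) (S j) ltac:(lia)).
  pose proof (lt_0_INR (S (S n)) ltac:(lia)).
  pose proof (inv_INR_S_le (S n) (S (S n)) ltac:(lia)).
  pose proof (inv_INR_S_pos (S (S n))).
  pose proof (inv_le_swap x (INR (S (S n))) ltac:(lra) ltac:(lra) ltac:(lra)).
  unfold lifted_angle. set (X := clamp (radius (S (S n))) 1 x).
  assert (HX : radius (S (S n)) <= X <= / INR (S (S n))).
  { split; [apply clamp_in; apply inv_INR_S_le_1|]. unfold X, clamp.
    apply Rmax_lub; [lra|]. eapply Rle_trans; [apply Rmin_r | lra]. }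
  apply clamp_hi; [|apply two_PI_INR_le; lia].
  unfold Rdiv. apply Rmult_le_compat_l; [lra|].
  rewrite <- (Rinv_inv (INR (S (S n)))). apply Rinv_le_contravar; lra.
Qed.

Lemma centred_retract_all_circles (n : nat) (x : R) : I01 x ->
  centred_retract n (all_circles x) = polar (radius n) (lifted_angle n x).
Proof.
  intros Ix. destruct (Req_dec x 0) as [->|Hx0].
  { rewrite all_circles_0, lifted_angle_0. apply centred_retract_origin. }
  assert (Hx : 0 < x <= 1) by (unfold I01 in Ix; lra).
  destruct (earring_radius_index x Hx) as [j [Hj Hr]].
  assert (Hon : on_circle j (all_circles x)) by (apply all_circles_on_circle; [lra | exact Hj]).
  destruct (Nat.lt_total j n) as [Hjn|[<-|Hnj]].
  - rewrite (centred_retract_other n j _ Hon), (lifted_angle_before n j x Hx Hj Hjn) by lia.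
    apply centred_retract_origin.
  - rewrite (lifted_angle_during j x Hx Hj). unfold centred_retract.
    rewrite retract_on by exact Hon. unfold all_circles, polar. rewrite Hr. cbn [fst snd].
    f_equal; ring.
  - rewrite (centred_retract_other n j _ Hon), (lifted_angle_after n j x Hx Hj Hnj) by lia.
    apply centred_retract_origin.
Qed.

Definition witness_angle (n : nat) (t : R) : R := lifted_angle n (clamp 0 1 (2 * t)).

Lemma centred_retract_witness (n : nat) (t : R) : I01 t ->
  centred_retract n (fst (witness t)) = polar (radius n) (witness_angle n t).
Proof.
  intros It. rewrite witness_eq by exact It. apply centred_retract_all_circles.
  pose proof (clamp_in 0 1 (2 * t)). unfold I01; lra.
Qed.

Lemma witness_winding_sum (n : nat) : exists N0, forall N, (N0 <= N)%nat ->
  winding_sum (fun t => centred_retract n (fst (witness t))) N = - (2 * PI).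
Proof.
  set (L := 2 * (2 * PI / (radius (S (S n)) * radius (S (S n))))).
  pose proof PI_RGT_0. pose proof (inv_INR_S_pos (S (S n))).
  assert (HL : L > 0) by (unfold L; apply Rmult_lt_0_compat, Rdiv_lt_0_compat; nra).
  destruct (inv_INR_S_small (PI / 2 / L)) as [K HK]; [apply Rdiv_lt_0_compat; lra|].
  exists (S K). intros N HN.
  rewrite (winding_sum_ext _ (fun t => polar (radius n) (witness_angle n t)))
    by (intros; apply centred_retract_witness; assumption).
  rewrite (winding_sum_polar (witness_angle n) (radius n) L N).
  - unfold witness_angle. rewrite Rmult_0_r, Rmult_1_r, (clamp_id 0 1 0), (clamp_hi 0 1 2) by lra.
    rewrite lifted_angle_0, lifted_angle_1, (S_INR (S n)). ring.
  - apply inv_INR_S_pos.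
  - intros s t. unfold witness_angle. eapply Rle_trans; [apply lifted_angle_lip|].
    assert (Hc : Rabs (clamp 0 1 (2 * s) - clamp 0 1 (2 * t)) <= 2 * Rabs (s - t)).
    { eapply Rle_trans; [apply clamp_lip; lra|].
      rewrite <- Rmult_minus_distr_l, Rabs_mult, Rabs_right by lra. lra. }
    assert (0 < 2 * PI / (radius (S (S n)) * radius (S (S n)))) by (apply Rdiv_lt_0_compat; nra).
    unfold L. nra.
  - lia.
  - assert (/ INR N <= / INR (S K))
      by (replace N with (S (pred N)) by lia; apply inv_INR_S_le; lia).
    apply (Rmult_lt_reg_r (/ L)); [apply Rinv_0_lt_compat; exact HL|].
    assert (INR N <> 0) by (apply not_0_INR; lia).
    replace (L / INR N * / L) with (/ INR N) by (field; split; lra).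
    unfold Rdiv in HK |- *. lra.
Qed.

Lemma omega_word_winding_sum (w : R -> R * R) : omega_word dist2 HE HE0 w ->
  exists n, forall N, winding_sum (fun t => centred_retract n (w t)) N = 0.
Proof.
  intros Hw. destruct (omega_word_retract_trivial w Hw) as [B HB].
  exists B. intros N. rewrite <- (winding_sum_const (centred_retract B (0, 0)) N).
  apply winding_sum_ext. intros t It. unfold centred_retract. rewrite (HB B (le_n B) t It).
  rewrite retract_on by apply on_circle_0. reflexivity.
Qed.

Theorem mainTheorem14 :
  ~ (forall h : R -> (R * R) * (R * R),
       is_loop dist22 HExHE HExHE0 h ->
       ((exists f g : R -> R * R,
           in_Pomega dist2 HE HE0 f /\ in_Pomega dist2 HE HE0 g /\
           homotopic dist22 HExHE HExHE0 h (pair_path f g))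
        <-> in_Pomega dist22 HExHE HExHE0 h)).
Proof.
  intros Hall. destruct (Hall witness witness_loop) as [_ Hback].
  destruct (Hback witness_Pomega) as [f [g [[_ [w [Hw Hfw]]] [_ Hhp]]]].
  destruct (omega_word_winding_sum w Hw) as [n Hwn].
  destruct (homotopic_winding_sum n _ _ (homotopic_fst witness f g Hhp)) as [N1 HN1].
  destruct (homotopic_winding_sum n _ _ Hfw) as [N2 HN2].
  destruct (witness_winding_sum n) as [N3 HN3].
  set (N := Nat.max N1 (Nat.max N2 N3)).
  specialize (HN3 N ltac:(lia)). rewrite HN1, HN2, Hwn in HN3 by lia.
  pose proof PI_RGT_0. lra.
Qed.
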